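(* Let $\Gamma=(V,E)$ be a connected locally finite graph with root $o$, let $\lambda>1$, and let $(Z_n)$ be the $\lambda$-homesick random walk on $(\Gamma,o)$, assumed recurrent. Let $\rho_0=0$ and $\rho_k=\inf\{n>\rho_{k-1}:Z_n=o\}$. Then for every $0<c<1$ and every integer $k\ge\left(\frac{5(\lambda-1)}{\deg o}\right)^{1/c}$, \[\Pr\Big(|\mathrm{range}(Z_{\rho_k})|\le\frac N4\Big)\le e^{-N/8},\qquad\text{where } N=\min\Big\{\big|B_{\frac{c\log k}{\log\lambda}}\big|,\Big\lfloor\frac{\lambda-1}{\deg o}k^{1-c}\Big\rfloor\Big\}.\]
   Context: The $\lambda$-homesick random walk on $(\Gamma,o)$: $Z_0=o$; from a vertex $v$, letting $v_1,\dots,v_j$ be the neighbors with $\mathrm{dist}(o,v_i)=\mathrm{dist}(o,v)-1$ and $v'_1,\dots,v'_k$ the other neighbors, the walk moves to each $v_i$ with probability $\frac{\lambda}{\lambda j+k}$ and to each $v'_i$ with probability $\frac{1}{\lambda j+k}$. $B_r=\{v\in V:\mathrm{dist}(o,v)\le r\}$ for real $r\ge0$ (so $B_r=B_{\lfloor r\rfloor}$). $\mathrm{range}(Z_n)=\{Z_0,\dots,Z_n\}$. *)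

From HB Require Import structures.
From mathcomp Require Import all_boot all_order all_algebra.
From mathcomp Require Import all_classical all_reals all_analysis.
Set Implicit Arguments. Unset Strict Implicit. Unset Printing Implicit Defensive.
Import Order.TTheory GRing.Theory Num.Theory.
Local Open Scope ring_scope.

(* A locally finite graph on vertex type V is given by its neighbour lists
   [nbrs v] (a finite duplicate-free list of the neighbours of v). *)
Section Graph.
Variables (V : eqType) (nbrs : V -> seq V).

Definition simple_graph : Prop :=
  [/\ forall v w, (w \in nbrs v) = (v \in nbrs w),
      forall v, v \notin nbrs v &
      forall v, uniq (nbrs v)].

(* ball o n : list (with repetitions) of vertices at distance <= n from o *)
Fixpoint ball (o : V) (n : nat) : seq V :=
  match n with
  | 0 => [:: o]
  | n'.+1 => let b := ball o n' in b ++ flatten (map nbrs b)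
  end.

Definition connected_graph : Prop :=
  forall o v : V, exists n, v \in ball o n.

(* graph distance dist(o, v) (0 if v is unreachable, never the case for
   connected graphs) *)
Definition gdist (o v : V) : nat :=
  match pselect (exists n, v \in ball o n) with
  | left h => ex_minn h
  | right _ => 0%N
  end.

(* |B_r| for real r >= 0: B_r = B_{floor r} *)
Definition ball_card {R : realType} (o : V) (r : R) : nat :=
  size (undup (ball o (Num.truncn r))).

Variable R : realType.

Definition hs_prob (lam : R) (o v w : V) : R :=
  let down u := (gdist o u + 1 == gdist o v)%N in
  let j := count down (nbrs v) in
  let k := (size (nbrs v) - j)%N in
  let den := lam * j%:R + k%:R in
  if w \in nbrs v then (if down w then lam / den else 1 / den) else 0.

(* all walks of length n from v, listed as the sequence of visited vertices
   after v *)
Fixpoint walks (n : nat) (v : V) : seq (seq V) :=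
  match n with
  | 0 => [:: [::]]
  | n'.+1 => flatten [seq [seq w :: s | s <- walks n' w] | w <- nbrs v]
  end.

Fixpoint walk_weight (lam : R) (o v : V) (s : seq V) : R :=
  match s with
  | [::] => 1
  | w :: s' => hs_prob lam o v w * walk_weight lam o w s'
  end.

(* Probability that (Z_1, ..., Z_n) = s for some n and some s satisfying E,
   where the events {(Z_1..Z_n) = s} for s in E are disjoint. *)
Definition hs_Pr (lam : R) (o : V) (E : seq V -> bool) : \bar R :=
  (\sum_(0 <= n <oo)
     (\sum_(s <- walks n o | E s) walk_weight lam o o s)%:E)%E.

(* (Z_1..Z_n) = s with n = rho_k : exactly k visits to o at times 1..n and
   Z_n = o *)
Definition returns_k (o : V) (k : nat) (s : seq V) : bool :=
  (count (pred1 o) s == k) && (last o s == o) && (0 < size s)%N.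

Definition hs_recurrent (lam : R) (o : V) : Prop :=
  hs_Pr lam o (returns_k o 1) = 1%E.

Definition range_card (o : V) (s : seq V) : nat := size (undup (o :: s)).

End Graph.

From Pilot Require Import Defs.
From HB Require Import structures.
From mathcomp Require Import all_boot all_order all_algebra.
From mathcomp Require Import all_classical all_reals all_analysis.
From mathcomp Require Import ring lra zify.
Import Order.TTheory GRing.Theory Num.Theory.
Set Implicit Arguments. Unset Strict Implicit. Unset Printing Implicit Defensive.
Local Open Scope ring_scope.

(* Write d for the distance to o. The homesick walk is the reversible walk
   with conductances lam^-(min (d x) (d y)), so the path from a vertex v down
   to o has resistance sum_(i < d v) lam^i, and by the Dirichlet principle an
   excursion from o visits v before returning with probability at least
   q = (lam - 1) / (deg o * lam^r) whenever d v <= r. The harmonic function is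
   approached by Jacobi iteration: the iterates increase, so their defects
   have bounded sum and some iterate is almost harmonic.
   With r = floor (c log k / log lam) and beta = 1 - (1 - 1/e) q, the
   quantity exp (N/4 - s) * beta^(k - j), where s counts the vertices of B_r
   seen so far and j the returns so far, corrected between returns by the
   chance of hitting a fixed unseen vertex of B_r, is a supermartingale:
   while the range has at most N/4 <= |B_r|/4 vertices there is such a
   vertex, and each excursion finds it with probability at least q. Hence the probability is at most
   e^(N/4) beta^k <= exp (N/4 - 3 k q / 8) <= e^(-N/8), because N <= k q. *)

Lemma sumr_if_count (R : comNzRingType) (T : Type) (s : seq T) (b : pred T) (x y : R) :
  \sum_(i <- s) (if b i then x else y) =
  x * (count b s)%:R + y * (size s - count b s)%:R.
Proof.
elim: s => [|a s IH]; first by rewrite big_nil !mulr0 addr0.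
rewrite big_cons IH /=; case: (b a) => /=.
  by rewrite subSS natrD mulrDr; ring.
by rewrite add0n subSn ?count_size // -addn1 natrD; ring.
Qed.

Lemma ler_psum_uniq_sub (R : numDomainType) (T : eqType) (s t : seq T) (F : T -> R) :
  (forall x, 0 <= F x) -> uniq t -> {subset t <= s} ->
  \sum_(x <- t) F x <= \sum_(x <- s) F x.
Proof.
move=> F_ge0; elim: s t => [|a s IH] t t_uniq t_sub.
  by case: t t_uniq t_sub => [|b t] // _ /(_ b); rewrite inE eqxx => /(_ isT).
rewrite big_cons; case a_t: (a \in t).
  rewrite (perm_big _ (perm_to_rem a_t)) big_cons lerD2l; apply: IH.
    exact: rem_uniq.
  move=> x xt; have := t_sub x (mem_rem xt); rewrite inE => /orP [/eqP xa|//].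
  by move: xt; rewrite xa mem_rem_uniqF.
apply: le_trans (_ : \sum_(x <- s) F x <= _); last by rewrite lerDr.
apply: IH => // x xt; have := t_sub x xt; rewrite inE => /orP [/eqP xa|//].
by move: xt; rewrite xa a_t.
Qed.

Lemma size_undup_cat (T : eqType) (s t : seq T) :
  (size (undup s) <= size (undup (s ++ t)))%N.
Proof.
apply: uniq_leq_size; first exact: undup_uniq.
by move=> z; rewrite !mem_undup mem_cat => ->.
Qed.

(* The series law for resistances r and s, i.e. Cauchy-Schwarz in Engel form. *)
Lemma sqrD_divD_le (R : realFieldType) (a b r s : R) :
  0 <= r -> 0 < s -> (r = 0 -> a = 0) ->
  (a + b) ^+ 2 / (r + s) <= a ^+ 2 / r + b ^+ 2 / s.
Proof.
move=> r_ge0 s_gt0 ra0; have [r0|r_neq0] := eqVneq r 0.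
  by rewrite r0 (ra0 r0) !add0r expr0n /= invr0 mulr0 add0r.
have r_gt0 : 0 < r by rewrite lt_def r_neq0 r_ge0.
set X := a / r; set Y := b / s.
have -> : a = X * r by rewrite /X mulfVK // gt_eqF.
have -> : b = Y * s by rewrite /Y mulfVK // gt_eqF.
have -> : (X * r) ^+ 2 / r = X ^+ 2 * r by field; rewrite gt_eqF.
have -> : (Y * s) ^+ 2 / s = Y ^+ 2 * s by field; rewrite gt_eqF.
rewrite ler_pdivrMr ?addr_gt0 // -subr_ge0.
have -> : (X ^+ 2 * r + Y ^+ 2 * s) * (r + s) - (X * r + Y * s) ^+ 2
  = (X - Y) ^+ 2 * r * s by ring.
by apply: mulr_ge0; [apply: mulr_ge0; [exact: sqr_ge0 | exact: ltW] | exact: ltW].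
Qed.

Lemma bounded_sums_small_term (R : archiRealFieldType) (u : nat -> R) (B e : R) :
  0 < e -> (forall n, \sum_(0 <= i < n) u i <= B) -> exists n, u n <= e.
Proof.
move=> e_gt0 u_bnd; apply/not_existsP => u_big.
have {}u_big i : e < u i by rewrite ltNge; apply/negP/u_big.
set n := (Num.truncn (B / e)).+1.
have : e *+ n <= B.
  rewrite -(subn0 n) -sumr_const_nat; apply: le_trans (u_bnd n).
  by apply: ler_sum => i _; apply/ltW.
apply/negP; rewrite -ltNge -mulr_natr mulrC -ltr_pdivrMr //.
exact: truncnS_gt.
Qed.

Section Distance.
Variables (V : eqType) (nbrs : V -> seq V) (o : V).
Hypotheses (Hs : simple_graph nbrs) (Hc : connected_graph nbrs).
Local Notation d := (gdist nbrs o).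
Local Notation ball := (Defs.ball nbrs o).

Lemma nbrs_sym x y : (y \in nbrs x) = (x \in nbrs y).
Proof. by case: Hs => sym _ _; rewrite sym. Qed.

Lemma nbrs_neq x y : y \in nbrs x -> y != x.
Proof. by case: Hs => _ irr _ yx; apply/eqP => yx_eq; move: (irr x); rewrite -{1}yx_eq yx. Qed.

Lemma nbrs_uniq x : uniq (nbrs x).
Proof. by case: Hs. Qed.

Lemma sub_ball m n : (m <= n)%N -> {subset ball m <= ball n}.
Proof.
move=> /subnK <-; elim: (n - m)%N => [//|i IH] x /IH x_in.
by rewrite addSn /= mem_cat x_in.
Qed.

Lemma ball_nbrs n x y : x \in ball n -> y \in nbrs x -> y \in ball n.+1.
Proof. by move=> xn yx /=; rewrite mem_cat; apply/orP; right; apply/flatten_mapP; exists x. Qed.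

Lemma mem_ball v n : (v \in ball n) = (d v <= n)%N.
Proof.
have [v_in v_min] : v \in ball (d v) /\ forall n, v \in ball n -> (d v <= n)%N.
  rewrite /gdist; case: pselect => [h|]; first by case: ex_minnP.
  by case; apply: Hc.
by apply/idP/idP => [/v_min //|/sub_ball]; apply.
Qed.

Lemma gdist_root : d o = 0%N.
Proof. by apply/eqP; rewrite -leqn0 -mem_ball /= inE. Qed.

Lemma gdist_eq0 v : (d v == 0%N) = (v == o).
Proof.
apply/eqP/eqP => [dv0|->]; last exact: gdist_root.
by have := mem_ball v 0; rewrite dv0 /= inE => /eqP.
Qed.

Lemma gdist_nbrs x y : y \in nbrs x -> (d y <= (d x).+1)%N.
Proof. by move=> yx; rewrite -mem_ball; apply: ball_nbrs yx; rewrite mem_ball. Qed.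

Lemma gdist_parent v : v != o -> exists2 w, w \in nbrs v & (d w).+1 = d v.
Proof.
move=> vNo; have := mem_ball v (d v); rewrite leqnn; move: vNo; rewrite -gdist_eq0.
case dv: (d v) => [//|n] _ /=; rewrite mem_cat => /orP [|w_in].
  by rewrite mem_ball dv ltnn.
case/flatten_mapP: w_in => w w_in vw; exists w; first by rewrite nbrs_sym.
apply/eqP; rewrite eqSS eqn_leq -mem_ball w_in /= -ltnS -dv.
exact: gdist_nbrs.
Qed.

End Distance.

Section Conductance.
Variables (R : realType) (V : eqType) (nbrs : V -> seq V) (o : V) (lam : R).
Hypotheses (Hs : simple_graph nbrs) (Hc : connected_graph nbrs) (Hlam : 1 < lam).
Local Notation d := (gdist nbrs o).
Local Notation P := (hs_prob nbrs lam o).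

(* The homesick walk is the reversible walk with these edge conductances. *)
Definition cond x y : R := lam ^- minn (d x) (d y).
Definition weight x : R := \sum_(y <- nbrs x) cond x y.

Lemma lam_gt0 : 0 < lam. Proof. exact: lt_trans Hlam. Qed.

Lemma cond_gt0 x y : 0 < cond x y.
Proof. by rewrite invr_gt0 exprn_gt0 // lam_gt0. Qed.

Lemma condC x y : cond x y = cond y x.
Proof. by rewrite /cond minnC. Qed.

Lemma cond_root y : cond o y = 1.
Proof. by rewrite /cond (gdist_root o Hc) min0n expr0 invr1. Qed.

Lemma cond_nbrs x y : y \in nbrs x ->
  cond x y = lam ^- d x * (if (d y + 1)%N == d x then lam else 1).
Proof.
move=> yx; have dxy : (d x <= (d y).+1)%N by apply: (gdist_nbrs o Hc); rewrite (nbrs_sym Hs).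
rewrite /cond addn1; case: eqP => [<-|dxy_neq].
  by rewrite (minn_idPr (leqnSn _)) exprSr invfM mulfVK // gt_eqF ?lam_gt0.
rewrite mulr1 (minn_idPl _) //.
by move: dxy; rewrite leq_eqVlt ltnS => /orP [/eqP /esym|].
Qed.

Lemma weight_nbrs x : weight x = lam ^- d x *
  (lam * (count (fun u => (d u + 1)%N == d x) (nbrs x))%:R
   + (size (nbrs x) - count (fun u => (d u + 1)%N == d x) (nbrs x))%:R).
Proof.
rewrite /weight (eq_big_seq (fun y => lam ^- d x * (if (d y + 1)%N == d x then lam else 1))).
  by rewrite -mulr_sumr sumr_if_count mul1r.
by move=> y yx; rewrite cond_nbrs.
Qed.

Lemma hs_prob_cond x y : y \in nbrs x -> P x y = cond x y / weight x.
Proof.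
move=> yx; rewrite /hs_prob yx weight_nbrs cond_nbrs //.
have lam_d_neq0 : lam ^- d x != 0 by rewrite invr_eq0 expf_neq0 // gt_eqF ?lam_gt0.
rewrite invfM mulrACA mulfV // mul1r.
by case: eqP => _; rewrite ?mul1r ?div1r.
Qed.

Lemma weight_root : weight o = (size (nbrs o))%:R.
Proof.
by rewrite /weight -sum1_size natr_sum; apply: eq_bigr => y _; rewrite cond_root.
Qed.

Lemma hs_prob_ge0 x y : 0 <= P x y.
Proof.
case yx: (y \in nbrs x); last by rewrite /hs_prob yx.
by rewrite hs_prob_cond // divr_ge0 // ?sumr_ge0 // => *; apply/ltW/cond_gt0.
Qed.

Lemma sum_hs_probM x (f : V -> R) :
  \sum_(y <- nbrs x) P x y * f y = (\sum_(y <- nbrs x) cond x y * f y) / weight x.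
Proof. by rewrite mulr_suml; apply: eq_big_seq => y yx; rewrite hs_prob_cond // mulrAC. Qed.

Lemma sum_hs_prob_le1 x : \sum_(y <- nbrs x) P x y <= 1.
Proof.
under eq_bigr do rewrite -[P x _]mulr1.
rewrite sum_hs_probM; under eq_bigr do rewrite mulr1.
rewrite -/(weight x).
have [->|w_neq0] := eqVneq (weight x) 0; first by rewrite invr0 mulr0.
by rewrite mulfV.
Qed.

Lemma sum_hs_prob_root (f : V -> R) :
  \sum_(y <- nbrs o) P o y * f y = (\sum_(y <- nbrs o) f y) / (size (nbrs o))%:R.
Proof. by rewrite sum_hs_probM weight_root; under eq_bigr do rewrite cond_root mul1r. Qed.

End Conductance.

Section Escape.
Variables (R : realType) (V : eqType) (nbrs : V -> seq V) (o : V) (lam : R).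
Hypotheses (Hs : simple_graph nbrs) (Hc : connected_graph nbrs) (Hlam : 1 < lam).
Local Notation d := (gdist nbrs o).
Local Notation cond := (cond nbrs o lam).
Variables (L : nat) (v : V) (parent : V -> V).
Hypotheses (vNo : v != o) (dvL : (d v <= L)%N).
Hypothesis parentP : forall w, w != o -> parent w \in nbrs w /\ (d (parent w)).+1 = d w.

Let lam_gt0 : 0 < lam := lam_gt0 Hlam.
Let cond_ge0 x y : 0 <= cond x y := ltW (cond_gt0 nbrs o Hlam x y).

Definition region := undup (Defs.ball nbrs o L).

Lemma mem_region y : (y \in region) = (d y <= L)%N.
Proof. by rewrite mem_undup (mem_ball o Hc). Qed.

Lemma region_uniq : uniq region. Proof. exact: undup_uniq. Qed.

Lemma root_in_region : o \in region.
Proof. by rewrite mem_region (gdist_root o Hc). Qed.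

Lemma v_in_region : v \in region.
Proof. by rewrite mem_region. Qed.

Lemma parent_gdist w n : d w = n.+1 -> parent w \in nbrs w /\ d (parent w) = n.
Proof.
move=> dw; have wNo : w != o by rewrite -(gdist_eq0 o Hc) dw.
by have [pw] := parentP wNo; rewrite dw => -[].
Qed.

Definition rweight x := \sum_(y <- nbrs x | y \in region) cond x y.

Lemma rweight_ge0 x : 0 <= rweight x.
Proof. exact: sumr_ge0. Qed.

Lemma rweight_gt0 x : x \in region -> x != o -> 0 < rweight x.
Proof.
move=> xA xNo; have [px dpx] := parentP xNo.
have pA : parent x \in region.
  by move: xA; rewrite !mem_region -dpx; apply: ltnW.
apply: lt_le_trans (cond_gt0 nbrs o Hlam x (parent x)) _.
rewrite /rweight -big_filter.
have := @ler_psum_uniq_sub _ _ [seq y <- nbrs x | y \in region] [:: parent x] (cond x).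
rewrite big_cons big_nil addr0; apply => // y; rewrite inE => /eqP ->.
by rewrite mem_filter pA.
Qed.

(* Jacobi iteration for the Dirichlet problem on [region] with boundary
   values 0 at o and 1 at v. *)
Fixpoint relax (m : nat) (x : V) : R :=
  if m is m'.+1 then
    if x == v then 1 else if x == o then 0 else
    (\sum_(y <- nbrs x | y \in region) cond x y * relax m' y) / rweight x
  else (x == v)%:R.

Lemma relax_root m : relax m o = 0.
Proof. by case: m => [|m] /=; rewrite eq_sym (negbTE vNo) ?eqxx. Qed.

Lemma relax_v m : relax m v = 1.
Proof. by case: m => [|m] /=; rewrite eqxx. Qed.

Lemma relax_bnd m x : 0 <= relax m x <= 1.
Proof.
elim: m x => [|m IH] x /=; first by case: (x == v); rewrite ?lexx ?ler01.
case: (x == v); first by rewrite ler01 lexx.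
case: (x == o); first by rewrite lexx ler01.
have relax_ge0 y : 0 <= relax m y by case/andP: (IH y).
have num_le : \sum_(y <- nbrs x | y \in region) cond x y * relax m y <= rweight x.
  by apply: ler_sum => y _; rewrite ler_piMr //; case/andP: (IH y).
rewrite divr_ge0 ?rweight_ge0 ?sumr_ge0 // => [|y _]; last exact: mulr_ge0.
have [->|w_neq0] := eqVneq (rweight x) 0; first by rewrite invr0 mulr0 ler01.
by rewrite ler_pdivrMr ?mul1r // lt_def w_neq0 rweight_ge0.
Qed.

Lemma relax_mono m x : relax m x <= relax m.+1 x.
Proof.
elim: m x => [|m IH] x.
  rewrite /=; case: (x == v) => //; case: (x == o) => //.
  apply: divr_ge0 (rweight_ge0 x); apply: sumr_ge0 => y _.
  by apply: mulr_ge0 => //; case/andP: (relax_bnd 0 y).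
rewrite [relax m.+1 x]/= [relax m.+2 x]/=; case: (x == v) => //; case: (x == o) => //.
rewrite ler_wpM2r ?invr_ge0 ?rweight_ge0 //.
by apply: ler_sum => y _; apply: ler_wpM2l.
Qed.

Definition lap (f : V -> R) x := \sum_(y <- nbrs x | y \in region) cond x y * (f x - f y).

Definition dirichlet_energy (f : V -> R) :=
  \sum_(x <- region) \sum_(y <- nbrs x | y \in region) cond x y * (f x - f y) ^+ 2.

Lemma sum_region_swap (G : V -> V -> R) :
  \sum_(x <- region) \sum_(y <- nbrs x | y \in region) G x y =
  \sum_(x <- region) \sum_(y <- nbrs x | y \in region) G y x.
Proof.
have sum_nbrsE (H : V -> V -> R) x : \sum_(y <- nbrs x | y \in region) H x y =
    \sum_(y <- region) (y \in nbrs x)%:R * H x y.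
  rewrite -big_filter (perm_big [seq y <- region | y \in nbrs x]).
    rewrite big_filter big_mkcond; apply: eq_bigr => y _.
    by case: (y \in nbrs x); rewrite ?mul1r ?mul0r.
  apply: uniq_perm; rewrite ?filter_uniq ?region_uniq ?(nbrs_uniq Hs) // => y.
  by rewrite !mem_filter andbC.
rewrite (eq_bigr _ (fun x _ => sum_nbrsE G x)).
rewrite (eq_bigr _ (fun x _ => sum_nbrsE (fun a b => G b a) x)) exchange_big /=.
by apply: eq_bigr => x _; apply: eq_bigr => y _; rewrite (nbrs_sym Hs).
Qed.

Lemma sum_lap f : \sum_(x <- region) lap f x = 0.
Proof.
suff : \sum_(x <- region) lap f x = - \sum_(x <- region) lap f x by lra.
rewrite [LHS](sum_region_swap (fun x y => cond x y * (f x - f y))) -sumrN.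
apply: eq_bigr => x _; rewrite /lap -sumrN; apply: eq_bigr => y _.
by rewrite (condC nbrs o lam y x); ring.
Qed.

Lemma sum_mul_lap f : \sum_(x <- region) f x * lap f x = dirichlet_energy f / 2.
Proof.
have sum_lapE : \sum_(x <- region) f x * lap f x =
    \sum_(x <- region) \sum_(y <- nbrs x | y \in region) cond x y * (f x - f y) * f x.
  by apply: eq_bigr => x _; rewrite mulr_sumr; apply: eq_bigr => y _; rewrite mulrC.
suff -> : dirichlet_energy f = 2 * \sum_(x <- region) f x * lap f x by field.
rewrite mulr2n mulrDl mul1r {2}sum_lapE.
rewrite (sum_region_swap (fun x y => cond x y * (f x - f y) * f x)) sum_lapE -big_split /=.
apply: eq_bigr => x _; rewrite -big_split /=; apply: eq_bigr => y _.
by rewrite (condC nbrs o lam y x); ring.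
Qed.

Definition edges :=
  flatten [seq [seq (x, y) | y <- [seq y <- nbrs x | y \in region]] | x <- region].

Definition edge_energy (f : V -> R) (p : V * V) := cond p.1 p.2 * (f p.1 - f p.2) ^+ 2.

Lemma energy_edges f : dirichlet_energy f = \sum_(p <- edges) edge_energy f p.
Proof.
by rewrite big_flatten big_map; apply: eq_bigr => x _; rewrite big_map big_filter.
Qed.

Lemma mem_edges x y : x \in region -> y \in nbrs x -> y \in region -> (x, y) \in edges.
Proof.
by move=> xA yx yA; apply/flatten_mapP; exists x => //; rewrite map_f // mem_filter yA.
Qed.

Definition resist n : R := \sum_(0 <= i < n) lam ^+ i.

Lemma resist_ge0 n : 0 <= resist n.
Proof. by apply: sumr_ge0 => i _; rewrite exprn_ge0 // ltW. Qed.

Lemma resistS n : resist n.+1 = resist n + lam ^+ n.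
Proof. by rewrite /resist big_nat_recr. Qed.

Lemma resist_gt0 n : (0 < n)%N -> 0 < resist n.
Proof. by case: n => // n _; rewrite resistS ltr_wpDl ?resist_ge0 ?exprn_gt0. Qed.

Lemma resist_geo n : resist n * (lam - 1) = lam ^+ n - 1.
Proof.
elim: n => [|n IH]; first by rewrite /resist big_geq // mul0r expr0 subrr.
by rewrite resistS mulrDl IH exprS; ring.
Qed.

Fixpoint geodesic (n : nat) (w : V) : seq (V * V) :=
  if n is n'.+1 then (parent w, w) :: (w, parent w) :: geodesic n' (parent w) else [::].

Lemma geodesic_gdist n w p : d w = n -> p \in geodesic n w -> (d p.1 <= n)%N && (d p.2 <= n)%N.
Proof.
elim: n w => [//|n IH] w dw; have [_ dp] := parent_gdist dw.
rewrite !inE => /or3P [/eqP->|/eqP->|/(IH _ dp) /andP [p1 p2]] /=;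
  by rewrite ?dp ?dw ?leqnn ?leqnSn ?(leq_trans p1) ?(leq_trans p2).
Qed.

Lemma geodesic_uniq n w : d w = n -> uniq (geodesic n w).
Proof.
elim: n w => [//|n IH] w dw; have [pw dp] := parent_gdist dw.
rewrite /= IH // andbT !inE negb_or -andbA; apply/and3P; split.
- by rewrite xpair_eqE negb_and (nbrs_neq Hs pw).
- by apply/negP => /(geodesic_gdist dp) /andP [_]; rewrite /= dw ltnn.
- by apply/negP => /(geodesic_gdist dp) /andP []; rewrite /= dw ltnn.
Qed.

Lemma geodesic_sub n w : d w = n -> (n <= L)%N -> {subset geodesic n w <= edges}.
Proof.
elim: n w => [//|n IH] w dw nL; have [pw dp] := parent_gdist dw.
have pA : parent w \in region by rewrite mem_region dp ltnW.
have wA : w \in region by rewrite mem_region dw.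
move=> p; rewrite !inE => /or3P [/eqP->|/eqP->|]; last exact: IH dp (ltnW nL) p.
- by apply: mem_edges; rewrite // -(nbrs_sym Hs).
- exact: mem_edges.
Qed.

Lemma geodesic_energy f n w : d w = n ->
  2 * (f w - f o) ^+ 2 / resist n <= \sum_(p <- geodesic n w) edge_energy f p.
Proof.
elim: n w => [|n IH] w dw.
  by move/eqP: dw; rewrite (gdist_eq0 o Hc) => /eqP ->; rewrite subrr expr0n /= mulr0 mul0r big_nil.
have [pw dp] := parent_gdist dw.
rewrite /= !big_cons addrA.
have -> : edge_energy f (w, parent w) = edge_energy f (parent w, w).
  by rewrite /edge_energy /= (condC nbrs o lam) -sqrrN opprB.
set a := f (parent w) - f o; set b := f w - f (parent w).
have cond_parent : cond (parent w) w = lam ^- n.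
  by rewrite /cond dp dw (minn_idPl (leqnSn n)).
have a0 : resist n = 0 -> a = 0.
  have [n0|n_gt0] := posnP n; last by move=> r0; have := resist_gt0 n_gt0; rewrite r0 ltxx.
  by move: dp; rewrite n0 => /eqP; rewrite (gdist_eq0 o Hc) /a => /eqP ->; rewrite subrr.
have := sqrD_divD_le b (resist_ge0 n) (exprn_gt0 n lam_gt0) a0; rewrite -resistS => series.
have -> : f w - f o = a + b by rewrite /a /b; ring.
apply: le_trans (_ : 2 * (a ^+ 2 / resist n + b ^+ 2 / lam ^+ n) <= _).
  by rewrite -mulrA ler_wpM2l.
rewrite mulrDr addrC lerD //; first by apply: le_trans (IH _ dp); rewrite mulrA.
by rewrite /edge_energy /= cond_parent -sqrrN opprB -/b [lam ^- n * _]mulrC; lra.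
Qed.

Definition interior x := (x != o) && (x != v).

Lemma sum_region_split (h : V -> R) :
  \sum_(x <- region) h x = h o + h v + \sum_(x <- region | interior x) h x.
Proof.
rewrite (bigD1_seq o root_in_region region_uniq) /= -big_filter.
rewrite (bigD1_seq v) ?filter_uniq ?region_uniq ?mem_filter ?vNo ?v_in_region //=.
by rewrite big_filter_cond addrA.
Qed.

Lemma sum_region_nbrs x (F : V -> R) : (d x < L)%N ->
  \sum_(y <- nbrs x | y \in region) F y = \sum_(y <- nbrs x) F y.
Proof.
move=> dx; rewrite big_seq_cond [RHS]big_seq_cond; apply: eq_bigl => y.
case yx: (y \in nbrs x) => //=; rewrite mem_region.
exact: leq_trans (gdist_nbrs o Hc yx) dx.
Qed.

Lemma lap_relax m x : x \in region -> interior x ->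
  lap (relax m) x = rweight x * (relax m x - relax m.+1 x).
Proof.
move=> xA /andP [xNo xNv]; rewrite /lap; under eq_bigr do rewrite mulrBr.
rewrite sumrB -mulr_suml -/(rweight x) [relax m.+1 x]/= (negbTE xNv) (negbTE xNo) mulrC.
field.
by rewrite gt_eqF ?rweight_gt0.
Qed.

Definition defect m := \sum_(x <- region | interior x) rweight x * (relax m.+1 x - relax m x).

Lemma sum_defect_le M : \sum_(0 <= m < M) defect m <= \sum_(x <- region) rweight x.
Proof.
rewrite /defect exchange_big /=.
apply: le_trans (_ : _ <= \sum_(x <- region | interior x) rweight x) _.
  apply: ler_sum => x _; rewrite -mulr_sumr telescope_sumr // ler_piMr ?rweight_ge0 //.
  by case/andP: (relax_bnd M x) => _ h1; case/andP: (relax_bnd 0 x) => h0 _; lra.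
rewrite [leRHS](bigID interior) /= lerDl.
by apply: sumr_ge0 => x _; apply: rweight_ge0.
Qed.

Lemma energy_relax_ge m : 2 / resist (d v) <= dirichlet_energy (relax m).
Proof.
have := geodesic_energy (relax m) (erefl (d v)).
rewrite relax_root relax_v subr0 expr1n mulr1 => /le_trans; apply.
rewrite energy_edges; apply: ler_psum_uniq_sub; last exact: geodesic_sub.
  by move=> p; rewrite mulr_ge0 ?sqr_ge0.
exact: geodesic_uniq.
Qed.

(* Green's identity: half the energy is the current out of v, which is the
   current into o up to the defect. *)
Lemma flux_relax_ge m : dirichlet_energy (relax m) / 2 - defect m <=
  \sum_(y <- nbrs o | y \in region) cond o y * relax m y.
Proof.
have := sum_mul_lap (relax m); rewrite sum_region_split relax_root relax_v mul0r mul1r add0r.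
have := sum_lap (relax m); rewrite sum_region_split.
have -> : lap (relax m) o = - \sum_(y <- nbrs o | y \in region) cond o y * relax m y.
  by rewrite /lap -sumrN; apply: eq_bigr => y _; rewrite relax_root; ring.
have -> : \sum_(x <- region | interior x) lap (relax m) x = - defect m.
  rewrite /defect -sumrN big_seq_cond [RHS]big_seq_cond; apply: eq_bigr => x /andP [xA xI].
  by rewrite lap_relax // -mulrN opprB.
have : \sum_(x <- region | interior x) relax m x * lap (relax m) x <= 0.
  rewrite big_seq_cond; apply: sumr_le0 => x /andP [xA xI]; rewrite lap_relax //.
  apply: mulr_ge0_le0; first by case/andP: (relax_bnd m x).
  by apply: mulr_ge0_le0 (rweight_ge0 x) _; rewrite subr_le0 relax_mono.
lra.
Qed.

Lemma relax_escape : exists u : V -> R, [/\ u o = 0, u v = 1, (forall x, 0 <= u x <= 1),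
  (forall x, x != o -> x != v -> (d x < L)%N ->
      u x <= \sum_(y <- nbrs x) hs_prob nbrs lam o x y * u y) &
  (lam - 1) / lam ^+ d v <= \sum_(y <- nbrs o) u y].
Proof.
have dv_gt0 : (0 < d v)%N by rewrite lt0n (gdist_eq0 o Hc).
have lam_dv_gt0 : 0 < lam ^+ d v by rewrite exprn_gt0.
have resist_dv_gt0 := resist_gt0 dv_gt0.
pose eps := (resist (d v))^-1 - (lam - 1) / lam ^+ d v.
have eps_gt0 : 0 < eps.
  by rewrite subr_gt0 ltr_pdivrMr // ltr_pdivlMl // resist_geo ltrBlDr ltrDl.
have [m defect_m] := bounded_sums_small_term eps_gt0 sum_defect_le.
exists (relax m); split; [exact: relax_root | exact: relax_v | exact: relax_bnd | | ].
  move=> x xNo xNv dx; rewrite (sum_hs_probM o Hs Hc Hlam).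
  apply: le_trans (relax_mono m x) _.
  by rewrite /= (negbTE xNv) (negbTE xNo) /rweight !sum_region_nbrs.
rewrite -sum_region_nbrs ?(gdist_root o Hc) ?(leq_trans dv_gt0) //.
have -> : \sum_(y <- nbrs o | y \in region) relax m y =
    \sum_(y <- nbrs o | y \in region) cond o y * relax m y.
  by apply: eq_bigr => y _; rewrite (@cond_root _ _ nbrs o lam Hc) mul1r.
have := flux_relax_ge m; have := energy_relax_ge m; move: defect_m; rewrite /eps.
lra.
Qed.

End Escape.

Lemma escape_potential (R : realType) (V : eqType) (nbrs : V -> seq V) (o : V) (lam : R)
    (L : nat) (v : V) :
  simple_graph nbrs -> connected_graph nbrs -> 1 < lam ->
  v != o -> (gdist nbrs o v <= L)%N ->
  exists u : V -> R, [/\ u o = 0, u v = 1, (forall x, 0 <= u x <= 1),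
  (forall x, x != o -> x != v -> (gdist nbrs o x < L)%N ->
      u x <= \sum_(y <- nbrs x) hs_prob nbrs lam o x y * u y) &
  (lam - 1) / lam ^+ gdist nbrs o v <= \sum_(y <- nbrs o) u y].
Proof.
move=> Hs Hc Hlam vNo dvL.
have parent_ex w : exists p, w != o -> p \in nbrs w /\ (gdist nbrs o p).+1 = gdist nbrs o w.
  have [->|wNo] := eqVneq w o; first by exists o.
  by have [p pw dp] := gdist_parent Hs Hc wNo; exists p.
have [parent parentP] := choice parent_ex.
exact: (relax_escape Hs Hc Hlam vNo dvL parentP).
Qed.

Section Walks.
Variables (R : realType) (V : eqType) (nbrs : V -> seq V) (o : V) (lam : R).
Hypotheses (Hs : simple_graph nbrs) (Hc : connected_graph nbrs) (Hlam : 1 < lam).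
Local Notation w := (walk_weight nbrs lam o).

Lemma size_walks n x s : s \in walks nbrs n x -> size s = n.
Proof.
elim: n x s => [|n IH] x s /=; first by rewrite inE => /eqP ->.
by case/flatten_mapP => y _ /mapP [t t_in ->] /=; rewrite (IH _ _ t_in).
Qed.

Lemma walk_weight_ge0 x s : 0 <= w x s.
Proof.
elim: s x => [|y s IH] x /=; first exact: ler01.
by rewrite mulr_ge0 // (hs_prob_ge0 o Hs Hc Hlam).
Qed.

Lemma hs_Pr_le (E : pred (seq V)) (B : R) :
  (forall M, \sum_(0 <= n < M) \sum_(s <- walks nbrs n o | E s) w o s <= B) ->
  (hs_Pr nbrs lam o E <= B%:E)%E.
Proof.
move=> partial_le; apply: lime_le.
  apply: is_cvg_ereal_nneg_natsum => n _; rewrite lee_fin.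
  by apply: sumr_ge0 => s _; apply: walk_weight_ge0.
by apply: nearW => M; rewrite sumEFin lee_fin.
Qed.

Variables (k N : nat).

(* The walk so far has visited [vis], returned [j] times to o and is now at
   [x]; continued by [s] it becomes one of the walks counted by the theorem. *)
Definition good_tail (vis : seq V) (j : nat) (x : V) (s : seq V) : bool :=
  [&& count (pred1 o) s == (k - j)%N, last x s == o, (0 < size s)%N &
      ((size (undup (vis ++ s)))%:R <= N%:R / 4 :> R)].

Definition tail_mass_len n x vis j := \sum_(s <- walks nbrs n x | good_tail vis j x s) w x s.
Definition tail_mass m x vis j := \sum_(0 <= n < m) tail_mass_len n x vis j.

Lemma tail_mass_start m :
  tail_mass m o [:: o] 0 = \sum_(0 <= n < m) \sum_(s <- walks nbrs n o |
    returns_k o k s && ((range_card o s)%:R <= N%:R / 4 :> R)) w o s.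
Proof.
apply: eq_bigr => n _; apply: eq_bigl => s.
by rewrite /good_tail /returns_k /range_card subn0 -!andbA.
Qed.

Lemma good_tail_nil vis j x : good_tail vis j x [::] = false.
Proof. by rewrite /good_tail /= !andbF. Qed.

Lemma good_tail_cons vis j x y s : y != o ->
  good_tail vis j x (y :: s) = good_tail (rcons vis y) j y s.
Proof.
move=> yNo; rewrite /good_tail /= -cat_rcons (negbTE yNo).
by case: s => [|z s] /=; rewrite ?(negbTE yNo) ?andbF ?add0n.
Qed.

Lemma good_tail_cons_root vis j x s : (j < k)%N -> (0 < size s)%N ->
  good_tail vis j x (o :: s) = good_tail (rcons vis o) j.+1 o s.
Proof.
move=> jk s_gt0; rewrite /good_tail /= -cat_rcons s_gt0 eqxx add1n.
by rewrite (_ : (k - j)%N = (k - j.+1).+1) ?eqSS //; lia.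
Qed.

Lemma tail_mass0 x vis j : tail_mass 0 x vis j = 0.
Proof. by rewrite /tail_mass big_geq. Qed.

Lemma tail_mass_len0 x vis j : tail_mass_len 0 x vis j = 0.
Proof. by rewrite /tail_mass_len /= big_cons big_nil good_tail_nil. Qed.

Lemma tail_mass_lenS n x vis j : (j < k)%N -> tail_mass_len n.+1 x vis j =
  \sum_(y <- nbrs x) hs_prob nbrs lam o x y * (if y == o then
      ((n == 0%N) && (j.+1 == k) && ((size (undup (rcons vis o)))%:R <= N%:R / 4 :> R))%:R
        + tail_mass_len n o (rcons vis o) j.+1
    else tail_mass_len n y (rcons vis y) j).
Proof.
move=> jk; rewrite /tail_mass_len /= big_flatten big_map; apply: eq_bigr => y _.
rewrite big_map -mulr_sumr; congr (_ * _).
have [->|yNo] := eqVneq y o; last by apply: eq_bigl => s; rewrite good_tail_cons.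
case: n => [|n].
  rewrite /= !big_cons !big_nil good_tail_nil /good_tail /= eqxx cats1 addn0 !addr0.
  by rewrite (_ : (1 == k - j)%N = (j.+1 == k)); [case: (_ && _) | apply/eqP/eqP; lia].
rewrite add0r big_seq_cond [RHS]big_seq_cond; apply: eq_bigl => s.
case s_in: (s \in walks nbrs n.+1 o) => //.
by rewrite !andTb good_tail_cons_root // (size_walks s_in).
Qed.

Lemma tail_massS m x vis j : (j < k)%N -> tail_mass m.+1 x vis j =
  \sum_(y <- nbrs x) hs_prob nbrs lam o x y * (if y == o then
      ((0 < m)%N && (j.+1 == k) && ((size (undup (rcons vis o)))%:R <= N%:R / 4 :> R))%:R
        + tail_mass m o (rcons vis o) j.+1
    else tail_mass m y (rcons vis y) j).
Proof.
move=> jk; rewrite /tail_mass big_nat_recl // tail_mass_len0 add0r.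
under eq_bigr do rewrite tail_mass_lenS //.
rewrite exchange_big /=; apply: eq_bigr => y _; rewrite -mulr_sumr; congr (_ * _).
case: (y == o) => //; rewrite big_split /=; congr (_ + _).
case: m => [|m]; first by rewrite !big_geq.
by rewrite big_nat_recl //= big1 ?addr0.
Qed.

Lemma tail_mass_done m vis j : (k <= j)%N -> tail_mass m o vis j = 0.
Proof.
move=> kj; rewrite /tail_mass big1 // => n _; rewrite /tail_mass_len big1 // => s.
rewrite /good_tail (eqP (_ : k - j == 0)%N) ?subn_eq0 //.
case/and4P => no_ret /eqP s_last s_gt0 _; exfalso.
have : o \in s by rewrite -s_last; case: s s_gt0 {no_ret s_last} => //= z s _; exact: mem_last.
by rewrite -has_pred1 has_count (eqP no_ret).
Qed.

Lemma tail_mass_big m x vis j :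
  N%:R / 4 < (size (undup vis))%:R :> R -> tail_mass m x vis j = 0.
Proof.
move=> vis_big; rewrite /tail_mass big1 // => n _; rewrite /tail_mass_len big1 // => s.
by case/and4P => _ _ _; rewrite leNgt (lt_le_trans vis_big) // ler_nat size_undup_cat.
Qed.

End Walks.

Definition gain (R : realType) : R := 1 - expR (-1).

Lemma gain_bnd (R : realType) : 0 <= gain R <= 1.
Proof.
rewrite /gain subr_ge0 expR_le1 oppr_le0 ler01 /= lerBlDr lerDl.
exact/ltW/expR_gt0.
Qed.

Lemma gain_ge (R : realType) : 3 / 8 <= gain R.
Proof.
have e_ge2 : 2 <= expR (1 : R) by have := expR_ge1Dx (1 : R).
have : (expR (1 : R))^-1 <= 2^-1 by rewrite lef_pV2 ?posrE ?expR_gt0.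
by rewrite /gain expRN; lra.
Qed.

Section Potential.
Variables (R : realType) (V : eqType) (nbrs : V -> seq V) (o : V) (lam : R).
Hypotheses (Hs : simple_graph nbrs) (Hc : connected_graph nbrs) (Hlam : 1 < lam).
Local Notation d := (gdist nbrs o).
Local Notation P := (hs_prob nbrs lam o).
Variables (k N L r : nat) (U : V -> V -> R) (q : R).
Local Notation tail_mass := (tail_mass nbrs o lam k N).
Local Notation gain := (gain R).

Definition ball_r := undup (Defs.ball nbrs o r).

Hypothesis U_bnd : forall v x, 0 <= U v x <= 1.
Hypothesis U_escape : forall v, v \in ball_r -> v != o ->
  [/\ U v o = 0, U v v = 1,
      (forall x, x != o -> x != v -> (d x < L)%N -> U v x <= \sum_(y <- nbrs x) P x y * U v y) &
      q <= \sum_(y <- nbrs o) P o y * U v y].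
Hypothesis N_gt1 : (1 < N)%N.
Hypothesis N_le_ball : (N <= size ball_r)%N.

Definition beta : R := 1 - gain * q.
Definition seen (vis : seq V) := count (mem vis) ball_r.
Definition seen_decay (vis : seq V) : R := expR (- (seen vis)%:R).
Definition excursion_factor (j : nat) : R := expR (N%:R / 4) * beta ^+ (k - j).

(* Away from o, the last factor accounts for the chance, at least [U v x], of
   visiting the unseen vertex [v] of [ball_r] before the next return to o,
   which would multiply [seen_decay] by [1 - gain] = 1/e. *)
Definition potential x vis j v : R :=
  if x == o then excursion_factor j * seen_decay vis
  else excursion_factor j.+1 * seen_decay vis * (1 - (v \notin vis)%:R * gain * U v x).

Lemma ball_r_nontrivial : exists2 v, v \in ball_r & v != o.
Proof.
suff /hasP [v vB vNo] : has (predC1 o) ball_r by exists v.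
apply: contraTT N_gt1 => /hasPn ball_r_o.
rewrite -leqNgt (leq_trans N_le_ball) // -(size_nseq 1 o); apply: uniq_leq_size.
  exact: undup_uniq.
by move=> z /ball_r_o /negPn; rewrite inE.
Qed.

Lemma beta_ge0 : 0 <= beta.
Proof.
have [v vB vNo] := ball_r_nontrivial; have [_ _ _ q_le] := U_escape vB vNo.
have q_le1 : q <= 1.
  apply: le_trans q_le (le_trans _ (sum_hs_prob_le1 o Hs Hc Hlam o)).
  apply: ler_sum => y _; rewrite ler_piMr ?(hs_prob_ge0 o Hs Hc Hlam) //.
  by case/andP: (U_bnd v y).
have [gain_ge0 gain_le1] := andP (gain_bnd R).
by rewrite subr_ge0 (le_trans (ler_wpM2l gain_ge0 q_le1)) // mulr1.
Qed.

Lemma excursion_factor_ge0 j : 0 <= excursion_factor j.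
Proof. by rewrite mulr_ge0 ?exprn_ge0 ?beta_ge0 // ltW // expR_gt0. Qed.

Lemma excursion_factorS j : (j < k)%N -> excursion_factor j = excursion_factor j.+1 * beta.
Proof. by move=> jk; rewrite /excursion_factor -mulrA -exprSr; congr (_ * _ ^+ _); lia. Qed.

Lemma seen_decay_gt0 vis : 0 < seen_decay vis.
Proof. exact: expR_gt0. Qed.

Lemma seen_decay_le vis vis' : (seen vis <= seen vis')%N -> seen_decay vis' <= seen_decay vis.
Proof. by move=> le; rewrite ler_expR lerN2 ler_nat. Qed.

Lemma seen_rcons_le vis y : (seen vis <= seen (rcons vis y))%N.
Proof. by apply: sub_count => z /=; rewrite mem_rcons inE => ->; rewrite orbT. Qed.

Lemma seen_rcons_in vis y : y \in vis -> seen (rcons vis y) = seen vis.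
Proof. by move=> yv; apply: eq_count => z /=; rewrite mem_rcons inE; case: eqP => // ->. Qed.

Lemma seen_rcons_new vis y : y \in ball_r -> y \notin vis -> seen (rcons vis y) = (seen vis).+1.
Proof.
move=> yB yNv; rewrite /seen (eq_count (a2 := predU (pred1 y) (mem vis))) => [|z]; last first.
  by rewrite /= mem_rcons inE.
have := count_predUI (pred1 y) (mem vis) ball_r.
have -> : count (predI (pred1 y) (mem vis)) ball_r = 0%N.
  apply/eqP; rewrite -leqn0 leqNgt -has_count.
  by apply/hasP => -[z _ /andP [/eqP -> yv]]; exact: negP yNv yv.
by rewrite count_uniq_mem ?undup_uniq // yB addn0 add1n.
Qed.

Lemma seen_le_size vis : (seen vis <= size (undup vis))%N.
Proof.
rewrite /seen -size_filter; apply: uniq_leq_size; first by rewrite filter_uniq ?undup_uniq.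
by move=> z; rewrite mem_filter mem_undup => /andP [].
Qed.

Lemma damping_ge0 v (vis : seq V) x : 0 <= 1 - (v \notin vis)%:R * gain * U v x.
Proof.
have [a0 a1] := andP (gain_bnd R); have [u0 u1] := andP (U_bnd v x).
rewrite subr_ge0; case: (v \notin vis); rewrite ?mul0r ?ler01 // mul1r.
by rewrite -[1]mul1r ler_pM.
Qed.

Lemma potential_ge0 x vis j v : 0 <= potential x vis j v.
Proof.
have E := ltW (seen_decay_gt0 vis); rewrite /potential; case: (x == o).
  exact: mulr_ge0 (excursion_factor_ge0 _) E.
exact: mulr_ge0 (mulr_ge0 (excursion_factor_ge0 _) E) (damping_ge0 _ _ _).
Qed.

Lemma damping_step_new v vis y K : v \in ball_r -> v != o -> v \notin vis -> 0 <= K ->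
  K * seen_decay (rcons vis y) * (1 - (v \notin rcons vis y)%:R * gain * U v y)
    <= K * seen_decay vis * (1 - gain * U v y).
Proof.
move=> vB vNo vNvis K_ge0; have [_ U_vv _ _] := U_escape vB vNo.
have [->|yNv] := eqVneq y v.
  rewrite mem_rcons inE eqxx /= !mul0r subr0 mulr1 U_vv mulr1.
  rewrite /seen_decay seen_rcons_new // -addn1 natrD opprD expRD -mulrA ler_wpM2l //.
  by rewrite /gain opprB addrC subrK.
rewrite mem_rcons inE eq_sym (negbTE yNv) (negbTE vNvis) /= mul1r.
apply: ler_wpM2r; first by have := damping_ge0 v [::] y; rewrite /= mul1r.
by apply/ler_wpM2l/seen_decay_le/seen_rcons_le.
Qed.

Lemma damping_step_in v vis y K : v \in vis -> 0 <= K ->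
  K * seen_decay (rcons vis y) * (1 - (v \notin rcons vis y)%:R * gain * U v y)
    <= K * seen_decay vis.
Proof.
move=> vvis K_ge0; rewrite mem_rcons inE vvis orbT /= !mul0r subr0 mulr1.
by apply/ler_wpM2l/seen_decay_le/seen_rcons_le.
Qed.

Definition potential_bound m := forall x vis j v, (j < k)%N -> o \in vis -> x \in vis ->
  (d x + m <= L)%N -> (x != o -> v \in ball_r /\ v != o) ->
  tail_mass m x vis j <= potential x vis j v.

Lemma potential_bound0 : potential_bound 0.
Proof. by move=> x vis j v *; rewrite tail_mass0 potential_ge0. Qed.

Lemma damped_mean_le x v C b : 0 <= C ->
  \sum_(y <- nbrs x) P x y * (C * (1 - b * gain * U v y))
    <= C - C * b * gain * \sum_(y <- nbrs x) P x y * U v y.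
Proof.
move=> C_ge0; rewrite (eq_bigr (fun y => C * P x y - C * b * gain * (P x y * U v y)));
  last by move=> y _; ring.
rewrite sumrB -!mulr_sumr lerD2r ler_piMr //; exact: sum_hs_prob_le1.
Qed.

Lemma tail_return_le m vis j : potential_bound m -> (j < k)%N -> o \in vis -> (m <= L)%N ->
  ((0 < m)%N && (j.+1 == k) && ((size (undup (rcons vis o)))%:R <= N%:R / 4 :> R))%:R
    + tail_mass m o (rcons vis o) j.+1 <= excursion_factor j.+1 * seen_decay vis.
Proof.
move=> IH jk ovis mL; have [jk_eq|jk_neq] := eqVneq j.+1 k; last first.
  have jk' : (j.+1 < k)%N by rewrite ltn_neqAle jk_neq.
  rewrite andbF add0r; apply: le_trans (IH o _ _ o jk' _ _ _ _) _.
  - by rewrite mem_rcons mem_head.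
  - by rewrite mem_rcons mem_head.
  - by rewrite (gdist_root o Hc).
  - by rewrite eqxx.
  by rewrite /potential eqxx /seen_decay seen_rcons_in.
rewrite jk_eq tail_mass_done // addr0 /excursion_factor subnn expr0 mulr1 andbT.
have [small|_] := boolP ((size (undup (rcons vis o)))%:R <= N%:R / 4 :> R); last first.
  by rewrite andbF mulr_ge0 // ltW ?expR_gt0.
apply: le_trans (_ : 1 <= _); first by case: (_ && _); rewrite ?ler01.
rewrite /seen_decay -expRD -[X in X <= _](expR0 R) ler_expR subr_ge0.
apply: le_trans small; rewrite ler_nat (leq_trans (seen_le_size vis)) //.
by rewrite -cats1 size_undup_cat.
Qed.

Lemma tail_step_le m x vis j v y : potential_bound m -> (j < k)%N -> o \in vis ->
  y \in nbrs x -> y != o -> (d x + m.+1 <= L)%N -> v \in ball_r -> v != o ->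
  tail_mass m y (rcons vis y) j
    <= excursion_factor j.+1 * seen_decay vis * (1 - (v \notin vis)%:R * gain * U v y).
Proof.
move=> IH jk ovis yx yNo dxL vB vNo.
have dyL : (d y + m <= L)%N.
  by apply: leq_trans dxL; rewrite addnS -addSn leq_add2r gdist_nbrs.
apply: le_trans (IH y _ _ v jk _ _ dyL (fun=> conj vB vNo)) _.
- by rewrite mem_rcons inE ovis orbT.
- by rewrite mem_rcons mem_head.
rewrite /potential (negbTE yNo); have K_ge0 := excursion_factor_ge0 j.+1.
have [vvis|vNvis] := boolP (v \in vis); rewrite /= ?mul1r.
  by rewrite !mul0r subr0 mulr1; exact: damping_step_in.
exact: damping_step_new.
Qed.

Lemma potential_root_step m vis j v : potential_bound m -> (j < k)%N -> o \in vis ->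
  (m.+1 <= L)%N -> tail_mass m.+1 o vis j <= potential o vis j v.
Proof.
move=> IH jk ovis mL; rewrite /potential eqxx.
have K_ge0 := excursion_factor_ge0 j.+1.
have [vis_big|vis_small] := ltP (N%:R / 4 : R) (size (undup vis))%:R.
  by rewrite tail_mass_big // mulr_ge0 ?excursion_factor_ge0 // ltW ?seen_decay_gt0.
have : ~~ all (mem vis) ball_r.
  apply/negP => /allP ball_sub.
  have : (N <= size (undup vis))%N.
    apply: leq_trans N_le_ball (uniq_leq_size (undup_uniq _) _) => z /ball_sub.
    by rewrite mem_undup.
  rewrite -(ler_nat R) => N_le; have : (0 : R) < N%:R by rewrite ltr0n ltnW.
  lra.
case/allPn => v' v'B v'Nvis; have v'No : v' != o by apply: contraNneq v'Nvis => ->.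
have [_ _ _ q_le] := U_escape v'B v'No.
set C := excursion_factor j.+1 * seen_decay vis.
have C_ge0 : 0 <= C by rewrite mulr_ge0 // ltW ?seen_decay_gt0.
rewrite tail_massS //.
apply: le_trans (_ : \sum_(y <- nbrs o) P o y * (C * (1 - (v' \notin vis)%:R * gain * U v' y))
  <= _).
  rewrite big_seq [leRHS]big_seq; apply: ler_sum => y yo.
  rewrite (negbTE (nbrs_neq Hs yo)) ler_wpM2l ?(hs_prob_ge0 o Hs Hc Hlam) //.
  apply: (tail_step_le IH jk ovis yo (nbrs_neq Hs yo) _ v'B v'No).
  by rewrite (gdist_root o Hc).
apply: le_trans (damped_mean_le _ _ _ C_ge0) _.
have [gain_ge0 _] := andP (gain_bnd R).
have -> : excursion_factor j * seen_decay vis = C - C * gain * q.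
  by rewrite (excursion_factorS jk) /C /beta; ring.
have := ler_wpM2l (mulr_ge0 C_ge0 gain_ge0) q_le.
by rewrite v'Nvis mulr1n mulr1; lra.
Qed.

Lemma potential_away_step m x vis j v : potential_bound m -> (j < k)%N -> o \in vis ->
  x \in vis -> x != o -> (d x + m.+1 <= L)%N -> v \in ball_r -> v != o ->
  tail_mass m.+1 x vis j <= potential x vis j v.
Proof.
move=> IH jk ovis xvis xNo dxL vB vNo; have [U_vo _ U_sub _] := U_escape vB vNo.
rewrite /potential (negbTE xNo) tail_massS //.
set C := excursion_factor j.+1 * seen_decay vis.
have C_ge0 : 0 <= C by rewrite mulr_ge0 ?excursion_factor_ge0 // ltW ?seen_decay_gt0.
apply: le_trans (_ : \sum_(y <- nbrs x) P x y * (C * (1 - (v \notin vis)%:R * gain * U v y))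
  <= _).
  rewrite big_seq [leRHS]big_seq; apply: ler_sum => y yx.
  rewrite ler_wpM2l ?(hs_prob_ge0 o Hs Hc Hlam) //.
  have [->|yNo] := eqVneq y o; last exact: (tail_step_le IH jk ovis yx yNo dxL vB vNo).
  rewrite U_vo mulr0 subr0 mulr1; apply: tail_return_le => //.
  by move: dxL; lia.
apply: le_trans (damped_mean_le _ _ _ C_ge0) _.
have [vvis|vNvis] := boolP (v \in vis); first by rewrite /= mulr0n !mulr0 !mul0r !subr0 mulr1.
have xNv : x != v by apply: contraNneq vNvis => <-.
have [gain_ge0 _] := andP (gain_bnd R).
have dx_lt : (d x < L)%N by move: dxL; lia.
have := U_sub x xNo xNv dx_lt.
move/(ler_wpM2l (mulr_ge0 C_ge0 gain_ge0)).
by rewrite /= !mulr1n !mulr1; lra.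
Qed.

Lemma potential_boundS m : potential_bound m -> potential_bound m.+1.
Proof.
move=> IH x vis j v jk ovis xvis dxL xv; have [xo|xNo] := eqVneq x o.
  by rewrite xo; apply: potential_root_step; move: dxL; rewrite // xo (gdist_root o Hc).
by have [vB vNo] := xv xNo; apply: potential_away_step.
Qed.

Lemma tail_mass_start_le M : (0 < k)%N -> (M <= L)%N ->
  tail_mass M o [:: o] 0 <= expR (N%:R / 4) * beta ^+ k.
Proof.
move=> k_gt0 ML.
have bound_M : potential_bound M.
  by elim: M {ML} => [|M]; [exact: potential_bound0 | exact: potential_boundS].
apply: le_trans (bound_M o [:: o] 0 o k_gt0 _ _ _ _) _;
  rewrite ?mem_head ?eqxx ?(gdist_root o Hc) //.
rewrite /potential eqxx /excursion_factor subn0 ler_piMr ?mulr_ge0 ?exprn_ge0 ?beta_ge0 //.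
by rewrite /seen_decay expR_le1 oppr_le0 ler0n.
Qed.

End Potential.

Lemma gain_beta_pow_le (R : realType) (N k : nat) (q : R) :
  0 <= 1 - gain R * q -> N%:R <= k%:R * q ->
  expR (N%:R / 4) * (1 - gain R * q) ^+ k <= expR (- (N%:R / 8)).
Proof.
move=> beta_ge0 N_le_kq; have gain38 := gain_ge R.
have : (1 - gain R * q) ^+ k <= expR (- (gain R * q)) ^+ k.
  by rewrite lerXn2r ?nnegrE ?expR_ge1Dx // ltW ?expR_gt0.
rewrite -expRM_natl => /(ler_wpM2l (ltW (expR_gt0 (N%:R / 4)))) /le_trans; apply.
rewrite -expRD ler_expR mulrN.
have gain_ge0 : 0 <= gain R by apply: le_trans gain38; lra.
have : gain R * N%:R <= k%:R * (gain R * q) by rewrite mulrCA ler_wpM2l.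
have : 3 / 8 * N%:R <= gain R * N%:R by rewrite ler_wpM2r.
have : 0 <= N%:R :> R by [].
lra.
Qed.

Lemma escape_family (R : realType) (V : eqType) (nbrs : V -> seq V) (o : V) (lam : R)
    (r L : nat) :
  simple_graph nbrs -> connected_graph nbrs -> 1 < lam -> (r <= L)%N ->
  exists U : V -> V -> R, (forall v x, 0 <= U v x <= 1) /\
    forall v, v \in ball_r nbrs o r -> v != o ->
      [/\ U v o = 0, U v v = 1,
          (forall x, x != o -> x != v -> (gdist nbrs o x < L)%N ->
             U v x <= \sum_(y <- nbrs x) hs_prob nbrs lam o x y * U v y) &
          (lam - 1) / ((size (nbrs o))%:R * lam ^+ r)
            <= \sum_(y <- nbrs o) hs_prob nbrs lam o o y * U v y].
Proof.
move=> Hs Hc Hlam rL.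
have U_ex v : exists u : V -> R, (forall x, 0 <= u x <= 1) /\
    (v \in ball_r nbrs o r -> v != o -> [/\ u o = 0, u v = 1,
      (forall x, x != o -> x != v -> (gdist nbrs o x < L)%N ->
         u x <= \sum_(y <- nbrs x) hs_prob nbrs lam o x y * u y) &
      (lam - 1) / ((size (nbrs o))%:R * lam ^+ r)
        <= \sum_(y <- nbrs o) hs_prob nbrs lam o o y * u y]).
  have [vB|vNB] := boolP (v \in ball_r nbrs o r); last first.
    by exists (fun=> 0); split => [x|//]; rewrite lexx ler01.
  have [vo|vNo] := eqVneq v o; first by exists (fun=> 0); split => [x|//]; rewrite lexx ler01.
  have dvr : (gdist nbrs o v <= r)%N by rewrite -(mem_ball o Hc) -mem_undup.
  have [u [u_o u_v u_bnd u_sub u_flux]] := escape_potential Hs Hc Hlam vNo (leq_trans dvr rL).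
  exists u; split => // _ _; split => //.
  rewrite sum_hs_prob_root // invfM mulrA mulrAC ler_wpM2r ?invr_ge0 //.
  apply: le_trans u_flux; rewrite ler_wpM2l ?subr_ge0 ?(ltW Hlam) //.
  rewrite lef_pV2 ?posrE ?exprn_gt0 ?(lam_gt0 Hlam) //.
  by rewrite ler_eXn2l.
have [U U_spec] := choice U_ex.
by exists U; split => [v|v]; have [] := U_spec v.
Qed.

Lemma lam_pow_truncn_le (R : realType) (lam c : R) (k : nat) : 1 < lam -> 0 < c -> (0 < k)%N ->
  lam ^+ Num.truncn (c * ln k%:R / ln lam) <= k%:R `^ c.
Proof.
move=> lam_gt1 c_gt0 k_gt0; have lam_gt0 := lt_trans ltr01 lam_gt1.
have ln_lam_gt0 : 0 < ln lam := ln_gt0 lam_gt1.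
set y := c * ln k%:R / ln lam.
have y_ge0 : 0 <= y by rewrite divr_ge0 ?mulr_ge0 ?ln_ge0 ?ler1n // ltW.
have r_le : (Num.truncn y)%:R <= y by rewrite truncn_le.
rewrite -(powR_mulrn _ (ltW lam_gt0)); apply: le_trans (ler_powR (ltW lam_gt1) r_le) _.
suff -> : lam `^ y = k%:R `^ c by [].
apply: ln_inj; rewrite ?posrE ?powR_gt0 ?ltr0n //.
by rewrite !ln_powR /y mulfVK // gt_eqF.
Qed.

Lemma truncn_le_expected_hits (R : realType) (lam c : R) (k deg : nat) :
  1 < lam -> 0 < c -> (0 < k)%N ->
  (Num.truncn ((lam - 1) / deg%:R * k%:R `^ (1 - c)))%:R
    <= k%:R * ((lam - 1) / (deg%:R * lam ^+ Num.truncn (c * ln k%:R / ln lam))).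
Proof.
move=> lam_gt1 c_gt0 k_gt0; set r := Num.truncn (c * ln k%:R / ln lam).
have lam_r_gt0 : 0 < lam ^+ r by rewrite exprn_gt0 // (lt_trans ltr01).
have coef_ge0 : 0 <= (lam - 1) / deg%:R by rewrite divr_ge0 // subr_ge0 ltW.
have k_pow : k%:R `^ (1 - c) = k%:R / k%:R `^ c.
  by rewrite powRD ?pnatr_eq0 -?lt0n ?k_gt0 ?implybT // powRr1 ?ler0n // powRN.
have trunc_le : (Num.truncn ((lam - 1) / deg%:R * k%:R `^ (1 - c)))%:R
    <= (lam - 1) / deg%:R * k%:R `^ (1 - c) by rewrite truncn_le mulr_ge0 ?powR_ge0.
apply: le_trans trunc_le _.
have -> : k%:R * ((lam - 1) / (deg%:R * lam ^+ r)) = (lam - 1) / deg%:R * (k%:R / lam ^+ r).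
  by rewrite invfM; ring.
rewrite k_pow ler_wpM2l // ler_wpM2l // lef_pV2 ?posrE ?powR_gt0 ?ltr0n //.
exact: lam_pow_truncn_le.
Qed.

Theorem proposition4p2 (R : realType) (V : eqType) (nbrs : V -> seq V) (o : V)
  (lam : R) (c : R) (k : nat) :
  simple_graph nbrs -> connected_graph nbrs ->
  1 < lam -> hs_recurrent nbrs lam o ->
  0 < c -> c < 1 ->
  ((5 * (lam - 1) / (size (nbrs o))%:R) `^ c^-1 <= k%:R) ->
  let N : nat :=
    minn (ball_card nbrs o (c * ln k%:R / ln lam))
         (Num.truncn ((lam - 1) / (size (nbrs o))%:R * k%:R `^ (1 - c))) in
  (hs_Pr nbrs lam o
     (fun s => returns_k o k s && ((range_card o s)%:R <= N%:R / 4 :> R)%R)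
   <= (expR (- (N%:R / 8)))%:E)%E.
Proof.
move=> Hs Hc Hlam _ c_gt0 _ _ /=; set N := minn _ _.
apply: (hs_Pr_le Hs Hc Hlam) => M; rewrite -tail_mass_start.
have [->|k_gt0] := posnP k; first by rewrite tail_mass_done //; exact/ltW/expR_gt0.
have [N_le3|N_gt3] := leqP N 3.
  rewrite tail_mass_big /=; first exact/ltW/expR_gt0.
  have : N%:R <= 3 :> R by rewrite ler_nat.
  lra.
set r := Num.truncn (c * ln k%:R / ln lam).
have [U [U_bnd U_escape]] := escape_family (r := r) o Hs Hc Hlam (leq_addl M r).
have N_le_ball : (N <= size (ball_r nbrs o r))%N by rewrite geq_minl.
have N_gt1 : (1 < N)%N by apply: leq_trans N_gt3.
have := tail_mass_start_le Hs Hc Hlam U_bnd U_escape N_gt1 N_le_ball k_gt0 (leq_addr r M).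
move/le_trans; apply.
apply: gain_beta_pow_le; first exact: (beta_ge0 Hs Hc Hlam U_bnd U_escape N_gt1 N_le_ball).
apply: le_trans _ (truncn_le_expected_hits _ Hlam c_gt0 k_gt0).
by rewrite ler_nat geq_minr.
Qed.
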